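(* Let $\lambda \in [0,1]$ and let $L$ be a PLD realization. Define $\phi_{\lambda}(l) \coloneqq \ln\!\left(1 + (e^{l}-1)/\lambda\right)$ and define two random variables $\varphi^{\mathrm{rem}}_{\lambda}(L)$ and $\varphi^{\mathrm{add}}_{\lambda}(L)$ through their probability mass functions: for every $l \in [-\infty,\infty]$, \[ f_{\varphi^{\mathrm{rem}}_{\lambda}(L)}(l) \coloneqq \lambda\, f_{L}\big(\phi_{\lambda}(l)\big) + (1-\lambda)\, f_{-\widetilde{L}}\big(\phi_{\lambda}(l)\big), \qquad f_{\varphi^{\mathrm{add}}_{\lambda}(L)}(l) \coloneqq f_{L}\big(-\phi_{\lambda}(-l)\big), \] where $\widetilde{L}$ is the PLD dual of $L$ and $f_{-\widetilde{L}}(x) = f_{\widetilde{L}}(-x)$. Then for any two discrete distributions $P, Q$ on a common domain, with $P_{\lambda} \coloneqq \lambda P + (1-\lambda) Q$, we have that $\mathcal{L}_{P_{\lambda}/Q}$ is distributed as $\varphi^{\mathrm{rem}}_{\lambda}(\mathcal{L}_{P/Q})$ and $\mathcal{L}_{Q/P_{\lambda}}$ is distributed as $\varphi^{\mathrm{add}}_{\lambda}(\mathcal{L}_{Q/P})$.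
   Context: Privacy loss random variable: for distributions $P,Q$ on a domain $\Omega$, $\mathcal{L}_{P/Q}$ is the random variable $\ln\big(P(\omega)/Q(\omega)\big)$ with $\omega \sim P$ (taking values in $[-\infty,\infty]$); its distribution is the privacy loss distribution (PLD). A discrete random variable $L$ on $[-\infty,\infty]$ with PMF $f_L$ is a PLD realization if $\mathbb{E}[e^{-L}] \le 1$ and $f_L(-\infty) = 0$. The PLD dual of a PLD realization $L$ is the random variable $\widetilde{L}$ with PMF $f_{\widetilde{L}}(l) = f_L(-l)\, e^{l}$ for finite $l$ and with an atom at $+\infty$ of mass $f_{\widetilde{L}}(\infty) \coloneqq 1 - \mathbb{E}[e^{-L}]$. *)

From HB Require Import structures.
From mathcomp Require Import all_boot all_order all_algebra.
From mathcomp Require Import all_classical all_reals all_analysis.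
Set Implicit Arguments. Unset Strict Implicit. Unset Printing Implicit Defensive.
Import Order.TTheory GRing.Theory Num.Theory.
Local Open Scope classical_set_scope.
Local Open Scope ring_scope.

Section PLD.
Context {R : realType}.

(* A PMF of a discrete random variable on [-oo, +oo] is f : \bar R -> R. *)

(* Privacy loss value ln(P w / Q w) in [-oo,+oo] (with ln(a/0) = +oo for a > 0
   and ln(0/b) = -oo; the point P w = Q w = 0 has P-mass 0 and is irrelevant). *)
Definition ploss {Omega : Type} (P Q : Omega -> R) (w : Omega) : \bar R :=
  if Q w == 0 then +oo%E
  else if P w == 0 then -oo%E
  else (ln (P w / Q w))%:E.

Definition pld_pmf {Omega : choiceType} (P Q : Omega -> R) (l : \bar R) : R :=
  fine (\esum_(w in [set w | ploss P Q w = l]) (P w)%:E).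

Definition exp_neg_mean (f : \bar R -> R) : \bar R :=
  \esum_(l in [set: \bar R]) ((f l)%:E * expeR (- l))%E.

Definition dual_pmf (f : \bar R -> R) (l : \bar R) : R :=
  match l with
  | r%:E => f (- r)%:E * expR r
  | +oo%E => fine (1%E - exp_neg_mean f)%E
  | -oo%E => 0
  end.

Definition neg_pmf (f : \bar R -> R) (l : \bar R) : R := f (- l)%E.

Definition phi_arg (lam : R) (r : R) : R := 1 + (expR r - 1) / lam.

(* ln on [0, +oo) with ln 0 = -oo; None when the argument is negative
   (phi_lam(l) is then undefined). *)
Definition lnE_opt (x : R) : option (\bar R) :=
  if 0 < x then Some (ln x)%:E
  else if x == 0 then Some (-oo)%E
  else None.

Definition phi (lam : R) (l : \bar R) : option (\bar R) :=
  match l with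
  | +oo%E => Some +oo%E
  | r%:E => lnE_opt (phi_arg lam r)
  | -oo%E => lnE_opt (1 - lam^-1)
  end.

Definition pmf_at (f : \bar R -> R) (o : option (\bar R)) : R :=
  if o is Some x then f x else 0.

Definition rem_pmf (lam : R) (f : \bar R -> R) (l : \bar R) : R :=
  lam * pmf_at f (phi lam l) + (1 - lam) * pmf_at (neg_pmf (dual_pmf f)) (phi lam l).

Definition add_pmf (lam : R) (f : \bar R -> R) (l : \bar R) : R :=
  pmf_at (neg_pmf f) (phi lam (- l)%E).

End PLD.

From HB Require Import structures.
From mathcomp Require Import all_boot all_order all_algebra.
From mathcomp Require Import all_classical all_reals all_analysis.
From mathcomp Require Import ring.
Import Order.TTheory GRing.Theory Num.Theory.
Local Open Scope classical_set_scope.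
Local Open Scope ring_scope.

(* Everything is governed by the likelihood ratio a = P/Q. On the level set
   {Q != 0, P = a Q}, of Q-mass m(a), the mixture is P_lam = (lam a + 1 - lam) Q,
   so L_{P_lam/Q} and L_{Q/P_lam} are constant there, equal to l and -l where
   e^l = lam a + 1 - lam, i.e. a = e^{phi_lam(l)}. The P_lam-mass e^l m(a) then
   splits as lam (a m(a)) + (1 - lam) m(a), where a m(a) is the P-mass of
   {L_{P/Q} = ln a} and m(a) the Q-mass of {L_{Q/P} = - ln a}. The latter is a
   value of the PMF of the negated dual, since the dual of L_{P/Q} is L_{Q/P}:
   its atom at +oo, 1 - E[e^{-L}], is the Q-mass of {P = 0}, the case a = 0. *)

Section esum_real.
Context {R : realType} {T : choiceType}.
Implicit Types (A : set T) (g h : T -> R).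

Lemma fine_EFinM (r : R) (x : \bar R) : fine (r%:E * x)%E = r * fine x.
Proof.
case: x => [s| |] /=; rewrite ?mulr0 // mulr_infty.
all: by case: sgrP => _; rewrite ?mul0e ?mul1e ?mulN1e.
Qed.

Lemma esumZl A (r : R) (a : T -> \bar R) :
  0 <= r -> (forall w, (0 <= a w)%E) ->
  (\esum_(w in A) (r%:E * a w) = r%:E * \esum_(w in A) a w)%E.
Proof.
move=> r0 a0; rewrite /esum -ereal_supZl //; last first.
  by apply/set0P; exists 0%E; exists set0; [exact: fsets_set0 | rewrite fsbig_set0].
congr ereal_sup; apply/seteqP; split=> x /=.
  by move=> [F FA <-]; exists (\sum_(w \in F) a w)%E; [exists F | rewrite ge0_mule_fsumr].
by move=> [_ [F FA <-] <-]; exists F => //; rewrite ge0_mule_fsumr.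
Qed.

Lemma fine_esum_scale A (c : R) g h :
  0 <= c -> (forall w, 0 <= h w) -> (forall w, A w -> g w = c * h w) ->
  fine (\esum_(w in A) (g w)%:E) = c * fine (\esum_(w in A) (h w)%:E).
Proof.
move=> c0 h0 gh; rewrite (eq_esum (b := fun w => c%:E * (h w)%:E)%E); last first.
  by move=> w /gh ->.
by rewrite esumZl ?fine_EFinM // => w; rewrite lee_fin.
Qed.

Lemma esum_nonzero A g :
  \esum_(w in A) (g w)%:E = \esum_(w in A `&` [set w | g w != 0]) (g w)%:E.
Proof.
rewrite esum_mkcond [RHS]esum_mkcond; apply: eq_esum => w _.
rewrite in_setI; have [->|gw] := eqVneq (g w) 0; first by rewrite !if_same.
by rewrite (@mem_set _ [set w | g w != 0] w gw) andbT.
Qed.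

Lemma esum_fibers {T' : choiceType} (e : T -> T') (a : T -> \bar R) :
  (forall w, (0 <= a w)%E) ->
  \esum_(y in [set: T']) \esum_(w in [set w | e w = y]) a w =
  \esum_(w in [set: T]) a w.
Proof.
move=> a0; rewrite esum_esum //.
apply: (reindex_esum _ _ (fun w => (e w, w))); split.
- by move=> w _.
- by move=> w1 w2 _ _ [].
- by move=> [y w] [_ /= <-]; exists w.
Qed.

Section probability_weight.
Variable g : T -> R.
Hypothesis g0 : forall w, 0 <= g w.
Hypothesis g1 : \esum_(w in [set: T]) (g w)%:E = 1%E.

Lemma esum_fin_num A : \esum_(w in A) (g w)%:E \is a fin_num.
Proof.
have ge0 : (0 <= \esum_(w in A) (g w)%:E)%E.
  by apply: esum_ge0 => w _; rewrite lee_fin.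
rewrite ge0_fin_numE // (@le_lt_trans _ _ 1%E) ?ltry // -g1 esum_mkcond.
by apply: le_esum => w _; case: ifP; rewrite ?lee_fin.
Qed.

Lemma fine_esumC A :
  fine (1 - \esum_(w in A) (g w)%:E)%E = fine (\esum_(w in ~` A) (g w)%:E).
Proof.
have gA0 w : [set: T] w -> (0 <= (g w)%:E)%E by rewrite lee_fin.
by rewrite -g1 (esumID A setT) // !setTI addeC addeK ?esum_fin_num.
Qed.

End probability_weight.
End esum_real.

Section likelihood_ratio.
Context {R : realType} {T : choiceType}.
Implicit Types (X Y : T -> R) (w : T).

Definition ratio_level X Y (a : R) : set T :=
  [set w | Y w != 0 /\ X w = a * Y w].

Definition ratio_mass X Y (a : R) : R :=
  fine (\esum_(w in ratio_level X Y a) (Y w)%:E).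

Lemma ratio_level_swap X Y (r : R) :
  ratio_level Y X (expR r) = ratio_level X Y (expR (- r)).
Proof.
apply/seteqP; split=> w [nz XY]; rewrite /ratio_level /= XY; split.
- by rewrite mulf_eq0 expR_eq0.
- by rewrite mulrA -expRD addNr expR0 mul1r.
- by rewrite mulf_eq0 expR_eq0.
- by rewrite mulrA -expRD addrN expR0 mul1r.
Qed.

Lemma ploss_pinftyE X Y w : ploss X Y w = +oo%E <-> Y w = 0.
Proof.
rewrite /ploss; have [//|Yw] := eqVneq (Y w) 0.
by split=> [|/eqP]; [case: ifP | rewrite (negPf Yw)].
Qed.

Lemma ploss_ninfty X Y w : ploss X Y w = -oo%E -> X w = 0.
Proof. by rewrite /ploss; case: ifP => // _; case: ifP => // /eqP. Qed.

Lemma ploss_EFinE X Y w (r : R) : 0 <= X w -> 0 <= Y w ->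
  ploss X Y w = r%:E <-> ratio_level X Y (expR r) w.
Proof.
move=> X0 Y0; rewrite /ploss /ratio_level /=.
have [Yw|Yw] := eqVneq (Y w) 0; first by split=> // -[].
have [Xw|Xw] := eqVneq (X w) 0.
  by split=> // -[_]; rewrite Xw => /esym/eqP; rewrite mulf_eq0 expR_eq0 (negPf Yw).
have XY : 0 < X w / Y w by rewrite divr_gt0 // lt_neqAle eq_sym ?Xw ?Yw.
split=> [[<-]|[_ ->]]; first by rewrite lnK // divfK.
by rewrite mulfK // expRK.
Qed.

Lemma pld_pmf_ninfty X Y : pld_pmf X Y -oo = 0.
Proof. by rewrite /pld_pmf esum1 // => w /ploss_ninfty ->. Qed.

Lemma pld_pmf_pinfty X Y :
  pld_pmf X Y +oo = fine (\esum_(w in [set w | Y w = 0]) (X w)%:E).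
Proof.
rewrite /pld_pmf (_ : [set w | _] = [set w | Y w = 0]) //.
by apply/seteqP; split=> w /= /ploss_pinftyE.
Qed.

Lemma pld_pmf_pinfty_swap X Y : pld_pmf Y X +oo = ratio_mass X Y 0.
Proof.
rewrite pld_pmf_pinfty /ratio_mass esum_nonzero; congr (fine (esum _ _)).
apply/seteqP; split=> w /= [].
- by move=> Xw Yw; split; rewrite // Xw mul0r.
- by move=> Yw ->; rewrite mul0r.
Qed.

End likelihood_ratio.

Section privacy_loss_distribution.
Context {R : realType} {T : choiceType}.
Variables X Y : T -> R.
Hypotheses (X0 : forall w, 0 <= X w) (Y0 : forall w, 0 <= Y w).

Lemma pld_pmf_EFin (r : R) : pld_pmf X Y r%:E = expR r * ratio_mass X Y (expR r).
Proof.
rewrite /pld_pmf /ratio_mass.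
rewrite -(@fine_esum_scale _ _ _ (expR r) X Y (expR_ge0 r) Y0) => [|w []//].
by congr (fine (esum _ _)); apply/seteqP; split=> w /ploss_EFinE; apply.
Qed.

Lemma pld_pmf_EFin_swap (r : R) : pld_pmf Y X r%:E = ratio_mass X Y (expR (- r)).
Proof.
rewrite /pld_pmf /ratio_mass -ratio_level_swap; congr (fine (esum _ _)).
by apply/seteqP; split=> w /ploss_EFinE; apply.
Qed.

Lemma ratio_mass_lt0 (a : R) : a < 0 -> ratio_mass X Y a = 0.
Proof.
move=> a0; rewrite /ratio_mass esum1 // => w [Yw Xw]; exfalso.
have Yp : 0 < Y w by rewrite lt_neqAle eq_sym Yw Y0.
by have := X0 w; rewrite Xw pmulr_lge0 // leNgt a0.
Qed.

Lemma pmf_at_pld_lnE (a : R) :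
  pmf_at (pld_pmf X Y) (lnE_opt a) = a * ratio_mass X Y a.
Proof.
rewrite /lnE_opt; have [a_gt0|a_le0] := ltP 0 a; first by rewrite /= pld_pmf_EFin lnK.
have [->|a_neq0] := eqVneq a 0; first by rewrite /= pld_pmf_ninfty mul0r.
by rewrite /= ratio_mass_lt0 ?mulr0 // lt_neqAle a_neq0.
Qed.

Lemma pmf_at_neg_pld_lnE (a : R) :
  pmf_at (neg_pmf (pld_pmf Y X)) (lnE_opt a) = ratio_mass X Y a.
Proof.
rewrite /lnE_opt /neg_pmf; have [a_gt0|a_le0] := ltP 0 a.
  by rewrite /= pld_pmf_EFin_swap opprK lnK.
have [->|a_neq0] := eqVneq a 0; first by rewrite /= pld_pmf_pinfty_swap.
by rewrite /= ratio_mass_lt0 // lt_neqAle a_neq0.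
Qed.

Hypotheses (X1 : \esum_(w in [set: T]) (X w)%:E = 1%E)
  (Y1 : \esum_(w in [set: T]) (Y w)%:E = 1%E).

Lemma exp_neg_meanE :
  exp_neg_mean (pld_pmf X Y) = \esum_(w in ~` [set w | X w = 0]) (Y w)%:E.
Proof.
rewrite /exp_neg_mean [RHS]esum_mkcond -(esum_fibers (ploss X Y)); last first.
  by move=> w; case: ifP; rewrite ?lee_fin.
apply: eq_esum => -[r| |] _ /=.
- rewrite /pld_pmf fineK ?esum_fin_num // muleC -esumZl ?expR_ge0 //.
  apply: eq_esum => w /ploss_EFinE -/(_ (X0 w) (Y0 w)) [Yw Xw].
  have Xn0 : X w != 0 by rewrite Xw mulf_eq0 expR_eq0 negb_or Yw.
  rewrite ifT; last by rewrite inE /=; apply/eqP.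
  by rewrite -EFinM Xw mulrA -expRD addNr expR0 mul1r.
- by rewrite mule0 esum1 // => w /ploss_pinftyE ->; case: ifP.
- rewrite pld_pmf_ninfty mul0e esum1 // => w /ploss_ninfty Xw.
  by case: ifPn => // /set_mem [].
Qed.

Lemma dual_pmf_pld : dual_pmf (pld_pmf X Y) = pld_pmf Y X.
Proof.
apply/funext => -[r| |] /=.
- by rewrite pld_pmf_EFin pld_pmf_EFin_swap mulrAC -expRD addNr expR0 mul1r.
- by rewrite exp_neg_meanE (fine_esumC _ Y0 Y1) setCK pld_pmf_pinfty.
- by rewrite pld_pmf_ninfty.
Qed.

End privacy_loss_distribution.

Definition mixture {R : realType} {T : Type} (lam : R) (P Q : T -> R) (w : T) : R :=
  lam * P w + (1 - lam) * Q w.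

Section mixture.
Context {R : realType} {T : choiceType}.
Variables (lam : R) (P Q : T -> R).
Hypotheses (lam_gt0 : 0 < lam) (lam_le1 : lam <= 1).
Hypotheses (P0 : forall w, 0 <= P w) (P1 : \esum_(w in [set: T]) (P w)%:E = 1%E).
Hypotheses (Q0 : forall w, 0 <= Q w) (Q1 : \esum_(w in [set: T]) (Q w)%:E = 1%E).

Lemma mixture_ge0 w : 0 <= mixture lam P Q w.
Proof. by rewrite addr_ge0 // mulr_ge0 ?subr_ge0 // ltW. Qed.

Lemma ratio_level_mixture (c : R) :
  ratio_level (mixture lam P Q) Q c = ratio_level P Q (1 + (c - 1) / lam).
Proof.
have lam_neq0 : lam != 0 by rewrite gt_eqF.
rewrite /ratio_level /mixture; apply/seteqP; split=> w [Qw Mw]; split=> //.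
  have -> : P w = (lam * P w + (1 - lam) * Q w - (1 - lam) * Q w) / lam by field.
  by rewrite Mw; field.
by rewrite Mw; field.
Qed.

Lemma ratio_mass_mixture (c : R) :
  ratio_mass (mixture lam P Q) Q c = ratio_mass P Q (1 + (c - 1) / lam).
Proof. by rewrite /ratio_mass ratio_level_mixture. Qed.

Lemma pld_pmf_mixture_pinfty :
  pld_pmf (mixture lam P Q) Q +oo = lam * pld_pmf P Q +oo.
Proof.
rewrite !pld_pmf_pinfty; apply: fine_esum_scale => // [|w Qw]; first exact: ltW.
by rewrite /mixture Qw mulr0 addr0.
Qed.

Lemma pld_pmf_mixture : pld_pmf (mixture lam P Q) Q =1 rem_pmf lam (pld_pmf P Q).
Proof.
have lam_neq0 : lam != 0 by rewrite gt_eqF.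
move=> l; rewrite /rem_pmf dual_pmf_pld //; case: l => [r| |] /=.
- rewrite pld_pmf_EFin ?ratio_mass_mixture ?pmf_at_pld_lnE ?pmf_at_neg_pld_lnE //.
    by rewrite /phi_arg; field.
  exact: mixture_ge0.
- by rewrite pld_pmf_mixture_pinfty /neg_pmf /= pld_pmf_ninfty mulr0 addr0.
- by rewrite pld_pmf_ninfty pmf_at_pld_lnE ?pmf_at_neg_pld_lnE //; field.
Qed.

Lemma pld_pmf_swap_mixture :
  pld_pmf Q (mixture lam P Q) =1 add_pmf lam (pld_pmf Q P).
Proof.
move=> [r| |]; rewrite /add_pmf /=.
- rewrite pld_pmf_EFin_swap ?ratio_mass_mixture ?pmf_at_neg_pld_lnE //.
  exact: mixture_ge0.
- by rewrite pld_pmf_pinfty_swap ratio_mass_mixture pmf_at_neg_pld_lnE // sub0r mulN1r.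
- by rewrite /neg_pmf /= !pld_pmf_ninfty.
Qed.

End mixture.

Theorem mainTheorem1 (R : realType) (Omega : choiceType) (lam : R)
  (P Q : Omega -> R) :
  0 < lam <= 1 ->
  (forall w, 0 <= P w) -> (\esum_(w in [set: Omega]) (P w)%:E = 1%E) ->
  (forall w, 0 <= Q w) -> (\esum_(w in [set: Omega]) (Q w)%:E = 1%E) ->
  let Plam := fun w => lam * P w + (1 - lam) * Q w in
  (forall l : \bar R, pld_pmf Plam Q l = rem_pmf lam (pld_pmf P Q) l) /\
  (forall l : \bar R, pld_pmf Q Plam l = add_pmf lam (pld_pmf Q P) l).
Proof.
move=> /andP[lam_gt0 lam_le1] P0 P1 Q0 Q1 Plam; split.
- exact: pld_pmf_mixture.
- exact: pld_pmf_swap_mixture.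
Qed.
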